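(* Let $q=2^s$, $s\ge1$, let $n$ be odd, and let $C_1,C_2\subseteq\mathbb F_q^n$ be cyclic codes with generating sets $I_1^{(q)},I_2^{(q)}\subseteq\mathbb Z_n$ which form a $q$-ary CSS-$T$ pair (in particular $C_2\subseteq C_1$). For $i=1,2$ let $I_i^{(2)}\subseteq\mathbb Z_n$ be the generating set of the binary cyclic code $\mathrm{tr}(C_i)$ (with respect to the same $\beta$). Then (1) $I_2^{(q)}\subseteq I_1^{(q)}$, and (2) $0\notin I_1^{(2)}+I_1^{(2)}+I_2^{(2)}$ (equivalently, $n\bmod n$ does not lie in this sum).
   Context: A cyclic code $C\subseteq\mathbb F_q^n$ with $\gcd(q,n)=1$ is an ideal of $\mathbb F_q[x]/(x^n-1)$ generated by a polynomial $g(x)\mid x^n-1$. Fix a primitive $n$-th root of unity $\beta$ in an extension of $\mathbb F_q$. The generating set of $C$ is $I=\{i\in\mathbb Z_n: g(\beta^i)\neq 0\}$ (the defining set is its complement). The Minkowski sum of $A,B\subseteq\mathbb Z_n$ is $A+B=\{a+b:a\in A,b\in B\}$. Let $\mathrm{tr}:\mathbb F_q\to\mathbb F_2$, $\mathrm{tr}(x)=\sum_{i=0}^{s-1}x^{2^i}$, applied coordinatewise; $\mathrm{tr}(C)=\{\mathrm{tr}(c):c\in C\}$ (this is a binary cyclic code). Let $\mathcal H=\mathbb C^q$ with orthonormal basis $\{|x\rangle:x\in\mathbb F_q\}$ and $\mathcal H^{\otimes n}$ with basis $|x\rangle=|x_1\rangle\otimes\cdots\otimes|x_n\rangle$, $x\in\mathbb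 F_q^n$. For $\lambda\in\mathbb F_q$, $T^{(\lambda)}=\sum_{x\in\mathbb F_q}e^{i\pi\,\mathrm{tr}(\lambda x)/4}|x\rangle\langle x|$, where $\mathrm{tr}(\lambda x)\in\{0,1\}$ is regarded as an integer. For $\mathbb F_q$-linear codes $C_2\subseteq C_1\subseteq\mathbb F_q^n$, the CSS code $\mathrm{CSS}(C_1,C_2)\subseteq\mathcal H^{\otimes n}$ is the complex linear span of the states $|w+C_2\rangle=|C_2|^{-1/2}\sum_{c\in C_2}|w+c\rangle$ for $w\in C_1$. The pair $(C_1,C_2)$ is a $q$-ary CSS-$T$ pair if $(T^{(\lambda)})^{\otimes n}$ maps $\mathrm{CSS}(C_1,C_2)$ into itself for every $\lambda\in\mathbb F_q$. *)

From HB Require Import structures.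
From mathcomp Require Import all_boot all_order all_algebra all_field.
Set Implicit Arguments. Unset Strict Implicit. Unset Printing Implicit Defensive.
Import Order.TTheory GRing.Theory Num.Theory.
Local Open Scope ring_scope.

(* Vectors of F^n are row vectors 'rV[F]_n; Z_n is modelled by 'I_n with
   addition modulo n. *)

Definition wpoly (R : nzRingType) (n : nat) (c : 'rV[R]_n) : {poly R} :=
  \sum_(i < n) c ord0 i *: 'X^i.

(* cyclic code of length n generated by g (g | x^n - 1): the ideal <g> of
   R[x]/(x^n-1), seen as a set of words *)
Definition cyclic_code (R : finFieldType) (n : nat) (g : {poly R}) : {set 'rV[R]_n} :=
  [set c : 'rV[R]_n | g %| wpoly c].

Definition genset (R : nzRingType) (K : fieldType) (emb : R -> K) (beta : K)
  (n : nat) (g : {poly R}) : {set 'I_n} :=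
  [set i : 'I_n | (map_poly emb g).[beta ^+ i] != 0].

Definition msum (n : nat) (A B : {set 'I_n}) : {set 'I_n} :=
  [set i : 'I_n | [exists a in A, exists b in B, ((a + b) %% n)%N == i :> nat]].

Definition f2F (F : nzRingType) (b : 'F_2) : F := (val b)%:R.

Definition trF (F : finFieldType) (s : nat) (x : F) : F :=
  \sum_(i < s) x ^+ (2 ^ i).

Definition tr_nat (F : finFieldType) (s : nat) (x : F) : nat :=
  if trF s x == 0 then 0%N else 1%N.
Definition tr2 (F : finFieldType) (s : nat) (x : F) : 'F_2 := (tr_nat s x)%:R.

Definition trace_code (F : finFieldType) (s n : nat) (C : {set 'rV[F]_n})
  : {set 'rV['F_2]_n} := [set map_mx (tr2 s) c | c in C].

Definition omega8 : algC := 4.-root (-1).   (* = e^{i pi/4} *)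

Definition coset_state (F : finFieldType) (n : nat) (C2 : {set 'rV[F]_n})
  (w : 'rV[F]_n) : 'rV[F]_n -> algC :=
  fun x => (sqrtC (#|C2|%:R))^-1 * \sum_(c in C2) (x == w + c)%:R.

Definition in_CSS (F : finFieldType) (n : nat) (C1 C2 : {set 'rV[F]_n})
  (v : 'rV[F]_n -> algC) : Prop :=
  exists a : 'rV[F]_n -> algC,
    forall x, v x = \sum_(w in C1) a w * coset_state C2 w x.

Definition Tn (F : finFieldType) (s n : nat) (lam : F)
  (v : 'rV[F]_n -> algC) : 'rV[F]_n -> algC :=
  fun x => (\prod_(j < n) omega8 ^+ tr_nat s (lam * x ord0 j)) * v x.

Definition CSST_pair (F : finFieldType) (s n : nat) (C1 C2 : {set 'rV[F]_n})
  : Prop :=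
  C2 \subset C1 /\
  forall (lam : F) (v : 'rV[F]_n -> algC), in_CSS C1 C2 v -> in_CSS C1 C2 (Tn s lam v).

From HB Require Import structures.
From mathcomp Require Import all_boot all_order all_algebra all_field zify.
Import GRing.Theory Num.Theory.
Local Open Scope ring_scope.
Set Implicit Arguments. Unset Strict Implicit.

(* Part (1): C2 <= C1 forces g1 %| g2, so every non-root of g2 is a non-root
   of g1.
   Part (2): with lambda = 1, T^(x)n multiplies |x> by omega^|tr x|, where
   |tr x| is the Hamming weight of tr(x), while every state of CSS(C1,C2) is
   constant on the cosets of C2.  Hence |tr (w + c)| = |tr w| (mod 8) for w in
   C1 and c in C2.  As |tr (x + y)| = |tr x| + |tr y| - 2 |tr x * tr y|, this
   gives 4 %| |tr w * tr c| and then 2 %| |tr w * tr w' * tr c|: the form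
   sum_t a_t b_t c_t vanishes in characteristic 2 on tr(C1) x tr(C1) x tr(C2),
   hence, by trilinearity, on all multiples of h1, h1, h2 of degree < n.  If
   i + j + k = 0 with i, j in I1 and k in I2, the quotients (X^n - 1) /
   (X - beta^m), m = i, j, k, are such multiples; their coefficients are powers
   of beta^m, so the form evaluates to n, which is 1 in characteristic 2. *)

(* The characteristic hypothesis is only there to make the morphism instances
   below sound. *)
Definition f2F_pchar (R : nzRingType) (_ : 2 \in [pchar R]) : 'F_2 -> R := f2F R.

Section F2Embedding.
Variables (R : nzRingType) (R2 : 2 \in [pchar R]).

Lemma f2F_pchar_is_nmod_morphism : nmod_morphism (f2F_pchar R2).
Proof.
by split=> // a b; rewrite /f2F_pchar /f2F -natrD -[RHS](GRing.natr_mod_pchar R2).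
Qed.

Lemma f2F_pchar_is_monoid_morphism : monoid_morphism (f2F_pchar R2).
Proof.
by split=> // a b; rewrite /f2F_pchar /f2F -natrM -[RHS](GRing.natr_mod_pchar R2).
Qed.

HB.instance Definition _ := GRing.isNmodMorphism.Build 'F_2 R (f2F_pchar R2)
  f2F_pchar_is_nmod_morphism.
HB.instance Definition _ := GRing.isMonoidMorphism.Build 'F_2 R (f2F_pchar R2)
  f2F_pchar_is_monoid_morphism.
End F2Embedding.

Section Trace.
Variables (F : finFieldType) (s : nat).
Hypothesis cardF : #|F| = (2 ^ s)%N.

Lemma pchar2_card : 2 \in [pchar F].
Proof. exact: card_finPcharP cardF _. Qed.

Lemma trF_add (x y : F) : trF s (x + y) = trF s x + trF s y.
Proof.
rewrite /trF -big_split; apply: eq_bigr => i _; apply: exprDn_pchar.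
by rewrite (eq_pnat _ (pcharf_eq pchar2_card)) pnatX pnat_id.
Qed.

Lemma trF_sqr (x : F) : trF s x ^+ 2 = trF s x.
Proof.
rewrite -(pFrobenius_autE pchar2_card) rmorph_sum /=.
under eq_bigr do rewrite pFrobenius_autE -exprM -expnSr.
have := @big_ord_recr F 0 +%R s (fun i : 'I_s.+1 => x ^+ (2 ^ i)).
rewrite big_ord_recl /= expn0 expr1 -cardF expf_card addrC.
exact: addIr.
Qed.

Lemma trF_eq01 (x : F) : trF s x = 0 \/ trF s x = 1.
Proof.
have : trF s x * (trF s x - 1) = 0 by rewrite mulrBr mulr1 -expr2 trF_sqr subrr.
by move/eqP; rewrite mulf_eq0 subr_eq0 => /orP[] /eqP; [left | right].
Qed.

Lemma tr_nat_le1 (x : F) : (tr_nat s x <= 1)%N.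
Proof. by rewrite /tr_nat; case: ifP. Qed.

Lemma tr_natE (x : F) : (tr_nat s x)%:R = trF s x.
Proof. by rewrite /tr_nat; case: (trF_eq01 x) => ->; rewrite ?eqxx ?oner_eq0. Qed.

Lemma tr_nat0 : tr_nat s (0 : F) = 0%N.
Proof. by rewrite /tr_nat /trF big1 ?eqxx // => i _; rewrite expr0n expn_eq0. Qed.

Lemma tr_natD (x y : F) :
  (tr_nat s (x + y)%R + 2 * (tr_nat s x * tr_nat s y) = tr_nat s x + tr_nat s y)%N.
Proof.
have : (2 %| tr_nat s (x + y)%R + (tr_nat s x + tr_nat s y))%N.
  rewrite (dvdn_pcharf pchar2_card) !natrD !tr_natE trF_add.
  by rewrite (addrr_pchar2 pchar2_card).
have := tr_nat_le1 (x + y); have := tr_nat_le1 x; have := tr_nat_le1 y.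
move: (tr_nat s (x + y)%R) (tr_nat s x) (tr_nat s y); nia.
Qed.

End Trace.

Definition tr_overlap (F : finFieldType) (s n : nat) (xs : seq 'rV[F]_n) : nat :=
  \sum_(j < n) \prod_(x <- xs) tr_nat s (x ord0 j).

Lemma tr_overlapD (F : finFieldType) s n (x y : 'rV[F]_n) (xs : seq 'rV[F]_n) :
    #|F| = (2 ^ s)%N ->
  (tr_overlap s ((x + y)%R :: xs) + 2 * tr_overlap s [:: x, y & xs]
    = tr_overlap s (x :: xs) + tr_overlap s (y :: xs))%N.
Proof.
move=> cardF; rewrite /tr_overlap big_distrr -!big_split /=.
apply: eq_bigr => j _; rewrite !big_cons mxE mulnA mulnA -!mulnDl.
by rewrite -mulnA tr_natD.
Qed.

Lemma tr_overlap0 (F : finFieldType) s n xs :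
  tr_overlap s (0 :: xs : seq 'rV[F]_n) = 0%N.
Proof. by rewrite /tr_overlap big1 // => j _; rewrite big_cons mxE tr_nat0. Qed.

Lemma omega8_prim : 8.-primitive_root omega8.
Proof.
have w4 : omega8 ^+ 4 = -1 by rewrite /omega8 rootCK.
have w8 : omega8 ^+ 8 = 1 by rewrite (_ : 8 = 4 * 2)%N // exprM w4 sqrrN expr1n.
have [m pm dm] := prim_order_exists (isT : (0 < 8)%N) w8.
have n4 : ~~ (m %| 4)%N.
  rewrite (prim_order_dvd pm) w4; apply/negP => /eqP E.
  have : (2%:R : algC) == 0 by rewrite mulr2n -{1}E addNr.
  by rewrite pnatr_eq0.
have : (m <= 8)%N by apply: dvdn_leq.
move: dm n4 pm; case: m => [|[|[|[|[|[|[|[|[|m]]]]]]]]] //.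
Qed.

Section CSSTPair.
Variables (F : finFieldType) (s n : nat) (C1 C2 : {set 'rV[F]_n}).
Hypotheses (C1_zmod : zmod_closed C1) (C2_zmod : zmod_closed C2).

Lemma coset_stateE w x :
  coset_state C2 w x = (sqrtC #|C2|%:R)^-1 * (x - w \in C2)%:R.
Proof.
rewrite /coset_state; congr (_ * _).
under eq_bigr => c _ do rewrite addrC -subr_eq eq_sym.
have [Cxw | C'xw] := boolP (x - w \in C2).
  by rewrite (bigD1 (x - w)) //= eqxx big1 ?addr0 // => c /andP[_ /negbTE ->].
by rewrite big1 // => c Cc; case: eqP => // cE; rewrite -cE Cc in C'xw.
Qed.

Lemma coset_stateDr w x c :
  c \in C2 -> coset_state C2 w (x + c) = coset_state C2 w x.
Proof.
move=> C2c; rewrite !coset_stateE; congr (_ * (_ : bool)%:R).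
have [_ C2B] := C2_zmod; have [_ C2D] := GRing.zmod_closedD C2_zmod.
apply/idP/idP => [C2xcw | C2xw].
  by rewrite -(addrK c (x - w)) [x - w + c]addrAC C2B.
by rewrite addrAC C2D.
Qed.

Lemma in_CSS_shift v x c : in_CSS C1 C2 v -> c \in C2 -> v (x + c) = v x.
Proof.
move=> [a va] C2c; rewrite !va; apply: eq_bigr => w _.
by rewrite coset_stateDr.
Qed.

Lemma coset_state_in_CSS w : w \in C1 -> in_CSS C1 C2 (coset_state C2 w).
Proof.
move=> C1w; exists (fun w' => (w' == w)%:R) => x.
rewrite (bigD1 w) //= eqxx mul1r big1 ?addr0 // => w' /andP[_ /negbTE ->].
by rewrite mul0r.
Qed.

Lemma coset_state_self_neq0 w : coset_state C2 w w != 0.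
Proof.
have [C20 _] := C2_zmod.
rewrite coset_stateE subrr C20 mulr1 invr_eq0 sqrtC_eq0 pnatr_eq0 -lt0n.
by apply/card_gt0P; exists 0.
Qed.

Lemma Tn1E v (x : 'rV[F]_n) : Tn s 1 v x = omega8 ^+ tr_overlap s [:: x] * v x.
Proof.
rewrite /Tn /tr_overlap -prodrXr; congr (_ * _); apply: eq_bigr => j _.
by rewrite mul1r big_seq1.
Qed.

Hypotheses (cardF : #|F| = (2 ^ s)%N) (CSST : CSST_pair s C1 C2).

Lemma CSST_weight_mod8 w c : w \in C1 -> c \in C2 ->
  tr_overlap s [:: w + c] = tr_overlap s [:: w] %[mod 8].
Proof.
move=> C1w C2c; have /CSST.2 CSS_Tv := coset_state_in_CSS C1w.
have := in_CSS_shift w (CSS_Tv 1) C2c; rewrite !Tn1E coset_stateDr //.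
move/(mulIf (coset_state_self_neq0 w))/eqP.
by rewrite (eq_prim_root_expr omega8_prim) => /eqP.
Qed.

Lemma CSST_overlap2_mod4 w c : w \in C1 -> c \in C2 ->
  (4 %| tr_overlap s [:: w; c])%N.
Proof.
move=> C1w C2c; have C10 : 0 \in C1 by apply: (subsetP CSST.1); case: C2_zmod.
have := CSST_weight_mod8 C1w C2c; have := CSST_weight_mod8 C10 C2c.
rewrite add0r tr_overlap0; have := tr_overlapD w c [::] cardF.
move: (tr_overlap s [:: w + c]) (tr_overlap s [:: w; c]).
move: (tr_overlap s [:: w]) (tr_overlap s [:: c]); lia.
Qed.

Lemma CSST_overlap3_even w w' c : w \in C1 -> w' \in C1 -> c \in C2 ->
  (2 %| tr_overlap s [:: w; w'; c])%N.
Proof.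
move=> C1w C1w' C2c; have [_ C1D] := GRing.zmod_closedD C1_zmod.
have := CSST_overlap2_mod4 (C1D _ _ C1w C1w') C2c.
have := CSST_overlap2_mod4 C1w C2c; have := CSST_overlap2_mod4 C1w' C2c.
have := tr_overlapD w w' [:: c] cardF.
move: (tr_overlap s [:: w + w'; c]) (tr_overlap s [:: w; w'; c]).
move: (tr_overlap s [:: w; c]) (tr_overlap s [:: w'; c]); lia.
Qed.

End CSSTPair.

Section WordPolynomials.
Variables (R : nzRingType) (n : nat).
Implicit Types (x y : 'rV[R]_n) (p : {poly R}).

Lemma coef_wpoly x (i : 'I_n) : (wpoly x)`_i = x ord0 i.
Proof.
rewrite /wpoly coef_sum (bigD1 i) //= coefZ coefXn eqxx mulr1 big1 ?addr0 //.
by move=> k; rewrite -val_eqE => /negbTE nki; rewrite coefZ coefXn eq_sym nki mulr0.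
Qed.

Lemma coef_wpoly_ge x j : (n <= j)%N -> (wpoly x)`_j = 0.
Proof.
move=> le_nj; rewrite /wpoly coef_sum big1 // => i _.
by rewrite coefZ coefXn gtn_eqF ?mulr0 // (leq_trans (ltn_ord i)).
Qed.

Lemma wpoly0 : wpoly (0 : 'rV[R]_n) = 0.
Proof. by rewrite /wpoly big1 // => i _; rewrite mxE scale0r. Qed.

Lemma wpolyB x y : wpoly (x - y) = wpoly x - wpoly y.
Proof.
by rewrite /wpoly -sumrB; apply: eq_bigr => i _; rewrite !mxE scalerBl.
Qed.

Lemma wpoly_row p : (size p <= n)%N -> wpoly (\row_(i < n) p`_i) = p.
Proof.
move=> le_pn; apply/polyP => j; have [lt_jn | le_nj] := ltnP j n.
  by rewrite (coef_wpoly _ (Ordinal lt_jn)) mxE.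
by rewrite coef_wpoly_ge // nth_default // (leq_trans le_pn).
Qed.

End WordPolynomials.

Lemma cyclic_code_zmod_closed (K : finFieldType) n (g : {poly K}) :
  zmod_closed (cyclic_code n g).
Proof.
split=> [|x y]; first by rewrite inE wpoly0 dvdp0.
by rewrite !inE wpolyB; apply: dvdp_sub.
Qed.

Lemma cyclic_code_sub_dvdp (K : finFieldType) n (g1 g2 : {poly K}) :
  (0 < n)%N -> g1 %| 'X^n - 1 -> g2 %| 'X^n - 1 ->
  cyclic_code n g2 \subset cyclic_code n g1 -> g1 %| g2.
Proof.
move=> n_gt0 g1_dvd g2_dvd sub21; have [le_g2n | lt_ng2] := leqP (size g2) n.
  have : \row_(i < n) g2`_i \in cyclic_code n g2 by rewrite inE wpoly_row.
  by move/(subsetP sub21); rewrite inE wpoly_row.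
have Xn1_neq0 : 'X^n - 1 != 0 :> {poly K}.
  by rewrite -size_poly_eq0 size_Xn_sub_1.
have : size g2 == size ('X^n - 1 : {poly K}).
  by rewrite size_Xn_sub_1 // eqn_leq lt_ng2 -(size_Xn_sub_1 K n_gt0) dvdp_leq.
by rewrite (dvdp_size_eqp g2_dvd) => /(eqp_dvdr g1) ->.
Qed.

Lemma genset_dvdp (R K : fieldType) (e : {rmorphism R -> K})
    (beta : K) n (g1 g2 : {poly R}) :
  g1 %| g2 -> genset e beta n g2 \subset genset e beta n g1.
Proof.
move=> /dvdpP[k ->]; apply/subsetP => i; rewrite !inE rmorphM hornerM.
by rewrite mulf_eq0 negb_or => /andP[].
Qed.

Lemma eq_genset (R : nzRingType) (K : fieldType) (f f' : R -> K) (beta : K) n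
    (g : {poly R}) :
  f =1 f' -> genset f beta n g = genset f' beta n g.
Proof. by move=> eq_f; apply/setP => i; rewrite !inE (eq_map_poly eq_f). Qed.

Lemma msum_msumP n (A B C : {set 'I_n}) (x : 'I_n) :
  x \in msum (msum A B) C ->
  exists i j k, [/\ i \in A, j \in B, k \in C & (i + j + k = x %[mod n])%N].
Proof.
rewrite inE => /existsP[a /andP[+ /existsP[k /andP[Ck /eqP <-]]]].
rewrite inE => /existsP[i /andP[Ai /existsP[j /andP[Bj /eqP <-]]]].
by exists i, j, k; rewrite modnDml modn_mod.
Qed.

Definition tridot (R : nzRingType) n (p q r : {poly R}) : R :=
  \sum_(t < n) p`_t * q`_t * r`_t.

Section Tridot.
Variables (R : comNzRingType) (n : nat).
Implicit Types p q r : {poly R}.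

Lemma tridot_suml m (c : 'I_m -> R) (P : 'I_m -> {poly R}) q r :
  tridot n (\sum_(k < m) c k *: P k) q r = \sum_(k < m) c k * tridot n (P k) q r.
Proof.
rewrite /tridot; under eq_bigr do rewrite coef_sum !mulr_suml.
rewrite exchange_big; apply: eq_bigr => k _; rewrite mulr_sumr.
by apply: eq_bigr => t _; rewrite coefZ !mulrA.
Qed.

Lemma tridotC12 p q r : tridot n p q r = tridot n q p r.
Proof. by apply: eq_bigr => t _; rewrite (mulrC p`_t). Qed.

Lemma tridotC13 p q r : tridot n p q r = tridot n r q p.
Proof. by apply: eq_bigr => t _; rewrite mulrC (mulrC p`_t) mulrA. Qed.

End Tridot.

Lemma map_cyclic_code_span (K : finFieldType) (L : fieldType) (e : {rmorphism K -> L})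
    n (h : {poly K}) (P : {poly L}) :
  h != 0 -> map_poly e h %| P -> (size P <= n)%N ->
  exists m (c : 'I_m -> L) (W : 'I_m -> 'rV[K]_n),
    P = \sum_(k < m) c k *: map_poly e (wpoly (W k)) /\
    forall k, W k \in cyclic_code n h.
Proof.
move=> h_neq0 /divpK P_eq le_Pn; set u := P %/ _ in P_eq.
exists (size u), (fun k => u`_k), (fun k => \row_(i < n) (h * 'X^k)`_i).
have le_hXn (k : 'I_(size u)) : (size (h * 'X^k)%R <= n)%N.
  have u_neq0 : u != 0 by apply/eqP => u0; have := ltn_ord k; rewrite {2}u0 size_poly0.
  move: le_Pn; rewrite -P_eq size_mul ?map_poly_eq0 // size_map_poly size_mulXn //.
  have := ltn_ord k; move: (nat_of_ord k) => j; move: (size u) (size h) => a b; lia.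
split=> [|k]; last by rewrite inE wpoly_row // dvdp_mulIl.
rewrite -{1}P_eq -{1}(coefK u) poly_def big_distrl /=.
apply: eq_bigr => k _; rewrite wpoly_row // rmorphM /= map_polyXn -scalerAl.
by rewrite [_ * map_poly e h]mulrC.
Qed.

Lemma tridot_cyclic_eq0 (K : finFieldType) (L : fieldType) (e : {rmorphism K -> L})
    n (h1 h2 h3 : {poly K}) (P1 P2 P3 : {poly L}) :
  h1 != 0 -> h2 != 0 -> h3 != 0 ->
  (forall W1 W2 W3, W1 \in cyclic_code n h1 -> W2 \in cyclic_code n h2 ->
     W3 \in cyclic_code n h3 ->
     tridot n (map_poly e (wpoly W1)) (map_poly e (wpoly W2)) (map_poly e (wpoly W3))
       = 0) ->
  map_poly e h1 %| P1 -> map_poly e h2 %| P2 -> map_poly e h3 %| P3 ->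
  (size P1 <= n)%N -> (size P2 <= n)%N -> (size P3 <= n)%N ->
  tridot n P1 P2 P3 = 0.
Proof.
move=> h1_neq0 h2_neq0 h3_neq0 tridotW dvd1 dvd2 dvd3 le1 le2 le3.
have [m1 [c1 [W1 [-> C1W]]]] := map_cyclic_code_span h1_neq0 dvd1 le1.
rewrite tridot_suml big1 // => k1 _; rewrite tridotC12.
have [m2 [c2 [W2 [-> C2W]]]] := map_cyclic_code_span h2_neq0 dvd2 le2.
rewrite tridot_suml big1 ?mulr0 // => k2 _; rewrite tridotC13.
have [m3 [c3 [W3 [-> C3W]]]] := map_cyclic_code_span h3_neq0 dvd3 le3.
rewrite tridot_suml big1 ?mulr0 // => k3 _.
by rewrite tridotC13 tridotC12 tridotW ?mulr0.
Qed.

Definition Xn_sub1_quot (R : nzRingType) n (z : R) : {poly R} :=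
  \sum_(i < n) 'X^(n.-1 - i) * (z ^+ i)%:P.

Section XnSub1Quotient.
Variables (R : comNzRingType) (n : nat).

Lemma Xn_sub1_factor (z : R) : z ^+ n = 1 -> 'X^n - 1 = ('X - z%:P) * Xn_sub1_quot n z.
Proof.
move=> zn1; under [Xn_sub1_quot _ _]eq_bigr do rewrite rmorphXn.
by rewrite -subrXX -rmorphXn zn1.
Qed.

Lemma coef_Xn_sub1_quot (z : R) t : (t < n)%N -> (Xn_sub1_quot n z)`_t = z ^+ (n.-1 - t).
Proof.
move=> lt_tn; rewrite coef_sum.
under eq_bigr do rewrite coefMC coefXn.
have lt_n1t_n : (n.-1 - t < n)%N by lia.
rewrite (bigD1 (Ordinal lt_n1t_n)) //= big1.
  by rewrite addr0 (_ : n.-1 - (n.-1 - t) = t)%N ?eqxx ?mul1r //; lia.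
move=> i; rewrite -val_eqE /= => ni; case: eqP => [t_eq | _]; last by rewrite mul0r.
by move: ni; rewrite t_eq; have := ltn_ord i; lia.
Qed.

Lemma size_Xn_sub1_quot (z : R) : (size (Xn_sub1_quot n z) <= n)%N.
Proof.
apply: leq_trans (size_sum _ _ _) _; apply/bigmax_leqP => i _.
rewrite mulrC mul_polyC (leq_trans (size_scale_leq _ _)) // size_polyXn.
by have := ltn_ord i; lia.
Qed.

Lemma tridot_Xn_sub1_quot (a b c : R) : a * b * c = 1 ->
  tridot n (Xn_sub1_quot n a) (Xn_sub1_quot n b) (Xn_sub1_quot n c) = n%:R.
Proof.
move=> abc1; rewrite /tridot.
under eq_bigr => t _ do rewrite !coef_Xn_sub1_quot // -!exprMn abc1 expr1n.
by rewrite sumr_const card_ord.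
Qed.

End XnSub1Quotient.

Lemma map_dvdp_Xn_sub1_quot (K L : fieldType) (e : {rmorphism K -> L}) n
    (h : {poly K}) (z : L) :
  h %| 'X^n - 1 -> z ^+ n = 1 -> (map_poly e h).[z] != 0 ->
  map_poly e h %| Xn_sub1_quot n z.
Proof.
move=> h_dvd zn1 hz_neq0; rewrite -(dvdp_map e) rmorphB rmorph1 /= map_polyXn in h_dvd.
rewrite (Xn_sub1_factor zn1) mulrC Gauss_dvdpl // in h_dvd.
by rewrite coprimep_XsubC.
Qed.

Lemma tridot_trace_words (F : finFieldType) s (L : fieldType) (e : {rmorphism 'F_2 -> L})
    n (x y z : 'rV[F]_n) :
  let tr_poly w := map_poly e (wpoly (map_mx (tr2 s) w)) in
  tridot n (tr_poly x) (tr_poly y) (tr_poly z) = (tr_overlap s [:: x; y; z])%:R.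
Proof.
rewrite /tridot /tr_overlap natr_sum; apply: eq_bigr => t _.
rewrite !coef_map /= !coef_wpoly !mxE /tr2 !rmorph_nat !big_cons big_nil.
by rewrite muln1 -!natrM mulnA.
Qed.

Lemma CSST_tridot_trace_eq0 (F : finFieldType) s n (C1 C2 : {set 'rV[F]_n})
    (L : fieldType) (e : {rmorphism 'F_2 -> L}) :
  #|F| = (2 ^ s)%N -> 2 \in [pchar L] ->
  zmod_closed C1 -> zmod_closed C2 -> CSST_pair s C1 C2 ->
  forall W1 W2 W3, W1 \in trace_code s C1 -> W2 \in trace_code s C1 ->
    W3 \in trace_code s C2 ->
    tridot n (map_poly e (wpoly W1)) (map_poly e (wpoly W2)) (map_poly e (wpoly W3))
      = 0.
Proof.
move=> cardF L2 C1_zmod C2_zmod CSST W1 W2 W3.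
move=> /imsetP[x C1x ->] /imsetP[y C1y ->] /imsetP[z C2z ->].
rewrite tridot_trace_words.
have /dvdnP[m ->] := CSST_overlap3_even C1_zmod C2_zmod cardF CSST C1x C1y C2z.
by rewrite natrM (pcharf0 L2) mulr0.
Qed.

Lemma genset_sum_ndvd (L : fieldType) (K : finFieldType) (e : {rmorphism K -> L})
    n (beta : L) (h1 h2 h3 : {poly K}) :
  n%:R != 0 :> L -> n.-primitive_root beta ->
  h1 %| 'X^n - 1 -> h2 %| 'X^n - 1 -> h3 %| 'X^n - 1 ->
  (forall W1 W2 W3, W1 \in cyclic_code n h1 -> W2 \in cyclic_code n h2 ->
     W3 \in cyclic_code n h3 ->
     tridot n (map_poly e (wpoly W1)) (map_poly e (wpoly W2)) (map_poly e (wpoly W3))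
       = 0) ->
  forall i j k : 'I_n, i \in genset e beta n h1 -> j \in genset e beta n h2 ->
  k \in genset e beta n h3 -> ~~ (n %| i + j + k)%N.
Proof.
move=> n_neq0 prim dvd1 dvd2 dvd3 tridotW i j k; rewrite !inE => hi hj hk.
apply: contra n_neq0 => /eqP ijk_mod; apply/eqP.
have h_neq0 h : h %| 'X^n - 1 -> h != 0.
  apply: contraTneq => ->; rewrite dvd0p -size_poly_eq0 size_Xn_sub_1 //.
  exact: prim_order_gt0 prim.
have zn1 m : (beta ^+ m) ^+ n = 1 by rewrite -exprM mulnC exprM (prim_expr_order prim) expr1n.
have prod1 : beta ^+ i * beta ^+ j * beta ^+ k = 1.
  by rewrite -!exprD -(prim_expr_mod prim) ijk_mod expr0.
rewrite -(tridot_Xn_sub1_quot n prod1).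
by apply: tridot_cyclic_eq0 tridotW _ _ _ _ _ _;
  rewrite ?h_neq0 ?size_Xn_sub1_quot ?map_dvdp_Xn_sub1_quot.
Qed.

Unset Implicit Arguments.

Theorem mainTheorem11
  (s : nat) (F : finFieldType) (n : nat)
  (L : fieldType) (iota : {rmorphism F -> L}) (beta : L)
  (g1 g2 : {poly F}) (h1 h2 : {poly 'F_2}) :
  (0 < s)%N -> #|F| = (2 ^ s)%N -> odd n ->
  n.-primitive_root beta ->
  g1 %| 'X^n - 1 -> g2 %| 'X^n - 1 ->
  CSST_pair s (cyclic_code n g1) (cyclic_code n g2) ->
  h1 %| 'X^n - 1 -> h2 %| 'X^n - 1 ->
  cyclic_code n h1 = trace_code s (cyclic_code n g1) ->
  cyclic_code n h2 = trace_code s (cyclic_code n g2) ->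
  let I1q := genset iota beta n g1 in
  let I2q := genset iota beta n g2 in
  let I12 := genset (fun b : 'F_2 => iota (f2F F b)) beta n h1 in
  let I22 := genset (fun b : 'F_2 => iota (f2F F b)) beta n h2 in
  I2q \subset I1q /\
  (forall i0 : 'I_n, nat_of_ord i0 = 0%N -> i0 \notin msum (msum I12 I12) I22).
Proof.
move=> _ cardF odd_n prim g1_dvd g2_dvd CSST h1_dvd h2_dvd trC1 trC2 I1q I2q I12 I22.
split.
  exact/genset_dvdp/(cyclic_code_sub_dvdp (prim_order_gt0 prim) g1_dvd g2_dvd CSST.1).
have L2 : 2 \in [pchar L] := rmorph_pchar iota (pchar2_card cardF).
have n_neq0 : n%:R != 0 :> L by rewrite -(GRing.natr_mod_pchar L2) modn2 odd_n oner_eq0.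
have tridot_trace := CSST_tridot_trace_eq0 (f2F_pchar L2) cardF L2
  (cyclic_code_zmod_closed n g1) (cyclic_code_zmod_closed n g2) CSST.
rewrite -trC1 -trC2 in tridot_trace.
have iotaE : (fun b => iota (f2F F b)) =1 f2F_pchar L2 := fun b => rmorph_nat iota _.
move=> i0 i0_eq0; rewrite /I12 /I22 !(eq_genset _ _ _ iotaE).
apply/negP => /msum_msumP[i [j [k [hi hj hk ijk]]]].
have := genset_sum_ndvd n_neq0 prim h1_dvd h1_dvd h2_dvd tridot_trace hi hj hk.
by rewrite /dvdn ijk i0_eq0 mod0n.
Qed.
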